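(* Let $G$ be a finite connected graph with a fixed normal orientation $\varepsilon$ and a fixed total order on $E(G)$, and let $e=uv$ be the largest edge of $G$, assumed not to be a loop. Let $\varepsilon_1\neq\varepsilon_2$ be two reduced totally cyclic orientations of $G$ such that $e$ is cycle flippable neither with respect to $\varepsilon_1$ nor with respect to $\varepsilon_2$. Let $\varepsilon_1',\varepsilon_2'$ be the orientations of the contracted graph $G/e$ induced by $\varepsilon_1,\varepsilon_2$. Then $\varepsilon_1'$ and $\varepsilon_2'$ are not Eulerian equivalent.
   Context: An orientation assigns a direction to each edge; it is totally cyclic if every edge lies on a directed cycle. Two orientations $\varepsilon_1,\varepsilon_2$ of a graph are Eulerian equivalent if the spanning subgraph formed by the edges on which they differ, oriented by $\varepsilon_1$, has in-degree equal to out-degree at every vertex. Given the normal orientation $\varepsilon$ and the total order, an orientation $\varepsilon'$ is reduced if for every edge $f$, either $\varepsilon'(f)=\varepsilon(f)$, or there is no cycle that is directed with respect to $\varepsilon'$, contains $f$, and has all its other edges smaller than $f$. An edge $e$ with endpoints $u,v$ is cycle flippable with respect to an orientation if in $G-e$ (with the induced orientation) there are directed paths both from $u$ to $v$ and from $v$ to $u$. *)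

(* Finite multigraphs (loops and parallel edges allowed):
   vertices V : finType, edges 'I_m (the total order on edges is the natural
   order of ordinals), and ends f = (x, y) the two endpoints of edge f.
   An orientation o : E -> bool orients f from (ends f).1 to (ends f).2 when
   o f = true and the other way when o f = false. *)
From mathcomp Require Import all_boot.
Set Implicit Arguments. Unset Strict Implicit. Unset Printing Implicit Defensive.

Section Graphs.
Variables (V E : finType) (ends : E -> V * V).

Definition tl (o : E -> bool) (f : E) : V := if o f then (ends f).1 else (ends f).2.
Definition hd (o : E -> bool) (f : E) : V := if o f then (ends f).2 else (ends f).1.

Definition dcycle (o : E -> bool) (c : seq E) : bool :=
  [&& c != [::], cycle (fun f g => hd o f == tl o g) c & uniq (map (tl o) c)].

Definition totally_cyclic (o : E -> bool) : Prop :=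
  forall f : E, exists c, dcycle o c /\ f \in c.

Definition eulerian_equiv (o1 o2 : E -> bool) : Prop :=
  forall x : V, #|[set f | (o1 f != o2 f) && (hd o1 f == x)]|
              = #|[set f | (o1 f != o2 f) && (tl o1 f == x)]|.

Definition dstep (o : E -> bool) (e : E) : rel V :=
  fun x y => [exists f, [&& f != e, tl o f == x & hd o f == y]].

Definition cycle_flippable (o : E -> bool) (e : E) : bool :=
  connect (dstep o e) (ends e).1 (ends e).2 && connect (dstep o e) (ends e).2 (ends e).1.

Definition uadj : rel V :=
  fun x y => [exists f, (ends f == (x, y)) || (ends f == (y, x))].

Definition connected : Prop := forall x y : V, connect uadj x y.

(* Contraction G/e (e not a loop): the endpoint (ends e).2 is merged into (ends e).1 *)
Variable e : E.
Hypothesis he : (ends e).1 != (ends e).2.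

Lemma contr_ok (x : V) : (if x == (ends e).2 then (ends e).1 else x) != (ends e).2.
Proof. by case: (x =P (ends e).2) => // /eqP. Qed.

Definition cV := {x : V | x != (ends e).2}.
Definition cE := {f : E | f != e}.

Definition contr_v (x : V) : cV := exist (fun y => y != (ends e).2) _ (contr_ok x).

Definition c_ends (f : cE) : cV * cV :=
  (contr_v (ends (val f)).1, contr_v (ends (val f)).2).

Definition c_or (o : E -> bool) (f : cE) : bool := o (val f).

End Graphs.

Definition reduced (V : finType) (m : nat) (ends : 'I_m -> V * V)
  (eps o : 'I_m -> bool) : Prop :=
  forall f : 'I_m, o f = eps f \/
    ~ (exists c, [/\ dcycle ends o c, f \in c &
                    forall g, g \in c -> g != f -> (g < f)%N]).

From mathcomp Require Import all_boot.
From Stdlib Require Import FunctionalExtensionality.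
Set Implicit Arguments. Unset Strict Implicit. Unset Printing Implicit Defensive.

(* Let e = uv be the largest edge and D the set of edges on which o1 and o2
   differ, oriented by o1; put T = D \ {e}.
   (1) Reducedness of o1 and o2 forbids an o1-directed cycle inside D: at its
       largest edge g both orientations would agree with eps (the reversed
       cycle is o2-directed), although g lies in D.
   (2) Eulerian equivalence in G/e says that T is balanced (in = out) at
       every vertex other than u, v, and balanced on {u, v} taken together.
       A counting argument on the set of vertices reachable inside T then
       yields a T-walk between u and v, or T balanced everywhere.
   (3) A T-walk between u and v is impossible: since e is not cycle
       flippable, total cyclicity forces the direction of e in both o1 and
       o2, which makes e an edge of D closing the walk into a cycle in D.
   (4) If T is balanced everywhere, every edge of T lies on a directed cycle
       in T, so by (1) T is empty: o1 and o2 differ exactly on e. Then the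
       walk of G - e closing e in o2 shows that e is flippable in o1. *)

Section DirectedWalks.
Variables (V E : finType) (ends : E -> V * V).
Implicit Types (o : E -> bool) (S : pred E) (c : seq E).

Definition srel o S : rel V :=
  fun x y => [exists f, [&& S f, tl ends o f == x & hd ends o f == y]].

Lemma dstepE o e : dstep ends o e = srel o (predC1 e).
Proof. by []. Qed.

Definition follows o : rel E := fun f g => hd ends o f == tl ends o g.

Lemma connect_srel_sub o S S' x y : (forall f, S f -> S' f) ->
  connect (srel o S) x y -> connect (srel o S') x y.
Proof.
move=> sSS'; apply: connect_sub => a b /existsP [f /and3P [Sf tf hf]].
by apply: connect1; apply/existsP; exists f; rewrite sSS' ?tf ?hf.
Qed.

Lemma connect_srel_rev o1 o2 S x y : (forall f, S f -> o2 f = ~~ o1 f) ->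
  connect (srel o1 S) x y -> connect (srel o2 S) y x.
Proof.
move=> flip xy; have : connect [rel a b | srel o1 S b a] y x by rewrite connect_rev.
apply: connect_sub => a b /existsP [f /and3P [Sf tf hf]].
apply: connect1; apply/existsP; exists f.
by move: tf hf; rewrite Sf /tl /hd flip //; case: (o1 f) => /= -> ->.
Qed.

Lemma map_hd_path o f p g : path (follows o) f (rcons p g) ->
  map (hd ends o) (f :: p) = map (tl ends o) (rcons p g).
Proof.
elim: p f => [|h p IH] f /=; first by rewrite andbT => /eqP ->.
by case/andP => /eqP -> /IH /= ->.
Qed.

Lemma map_hd_cycle o c : cycle (follows o) c ->
  map (hd ends o) c = rot 1 (map (tl ends o) c).
Proof. by case: c => [|f p] // H; rewrite (map_hd_path H) map_rcons rot1_cons. Qed.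

Lemma dcycle_rev o o' c : (forall f, f \in c -> o' f = ~~ o f) ->
  dcycle ends o c -> dcycle ends o' (rev c).
Proof.
move=> flip /and3P [c0 cyc un]; apply/and3P; split.
- by rewrite -size_eq0 size_rev size_eq0.
- have call : all (mem c) c by apply/allP.
  rewrite rev_cycle -(eq_in_cycle (e := follows o) _ call) //.
  move=> f g fc gc /=; rewrite /follows /hd /tl !flip //.
  by case: (o f); case: (o g); rewrite /= eq_sym.
- rewrite map_rev rev_uniq.
  have -> : map (tl ends o') c = map (hd ends o) c.
    by apply/eq_in_map => f fc; rewrite /tl /hd flip //; case: (o f).
  by rewrite map_hd_cycle // rot_uniq.
Qed.

Lemma walk_edges o S x p : path (srel o S) x p ->
  exists q, [/\ all S q, map (tl ends o) q = belast x p & map (hd ends o) q = p].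
Proof.
elim: p x => [|a p IH] x /=; first by exists [::].
case/andP => /existsP [g /and3P [Sg /eqP tg /eqP hg]] /IH [q [Sq tq hq]].
by exists (g :: q); rewrite /= Sg Sq tq hq tg hg.
Qed.

Lemma follows_walk_edges o q x p g g' : map (tl ends o) q = belast x p ->
  map (hd ends o) q = p -> hd ends o g = x -> tl ends o g' = last x p ->
  path (follows o) g (rcons q g').
Proof.
elim: q x p g => [|h q IH] x p g /=.
  by case: p => // _ _ hg tg /=; rewrite /follows hg tg eqxx.
case: p => // a p /= [th tq] [hh hq] hg tg'.
by rewrite /follows hg th eqxx /=; apply: IH tq hq hh tg'.
Qed.

Lemma closing_walk_dcycle o S f : S f ->
  connect (srel o S) (hd ends o f) (tl ends o f) ->
  exists c, dcycle ends o c /\ all S c.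
Proof.
move=> Sf /connectP [p0 pth0 lst0].
case: (shortenP pth0) lst0 => p pth un _ lst.
have [q [Sq tq hq]] := walk_edges pth.
exists (f :: q); split; last by rewrite /= Sf.
apply/and3P; split => //.
- exact: (follows_walk_edges tq hq (erefl _) lst).
- by rewrite /= tq lst; move: un; rewrite lastI rcons_uniq.
Qed.

Lemma follows_connect o e f p g : path (follows o) f (rcons p g) ->
  e \notin p -> connect (dstep ends o e) (hd ends o f) (tl ends o g).
Proof.
elim: p f => [|h p IH] f /=; first by rewrite andbT => /eqP ->.
rewrite inE negb_or eq_sym => /andP [/eqP -> pth] /andP [h_ne_e ep].
apply: connect_trans (IH _ pth ep); apply: connect1.
by apply/existsP; exists h; rewrite h_ne_e !eqxx.
Qed.

Lemma dcycle_connect o c f : dcycle ends o c -> f \in c ->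
  connect (dstep ends o f) (hd ends o f) (tl ends o f).
Proof.
case/and3P => _ cyc un fc.
case: (rot_to fc) => i p rot_c.
have cyc' : cycle (follows o) (f :: p) by rewrite -rot_c rot_cycle.
have : uniq (f :: p) by rewrite -rot_c rot_uniq (map_uniq un).
by case/andP => fp _; apply: follows_connect cyc' fp.
Qed.

End DirectedWalks.

Section Flows.
Variables (V E : finType) (ends : E -> V * V) (o : E -> bool) (S : pred E).

Definition cin x := #|[set f | S f && (hd ends o f == x)]|.
Definition cout x := #|[set f | S f && (tl ends o f == x)]|.

Lemma sum_fibres (h : E -> V) (R : pred V) :
  \sum_(x | R x) #|[set f | S f && (h f == x)]| = #|[set f | S f && R (h f)]|.
Proof.
rewrite -sum1dep_card (partition_big h R) /=; last by move=> f /andP [].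
apply: eq_bigr => x Rx; rewrite -sum1dep_card; apply: eq_bigl => f.
by case: eqP => [->|_]; rewrite ?andbF // Rx !andbT.
Qed.

Lemma out_sub_in a :
  [set f | S f && connect (srel ends o S) a (tl ends o f)] \subset
  [set f | S f && connect (srel ends o S) a (hd ends o f)].
Proof.
apply/subsetP => f; rewrite !inE => /andP [Sf Rt]; rewrite Sf.
apply: connect_trans Rt (connect1 _); apply/existsP; exists f.
by rewrite Sf !eqxx.
Qed.

Lemma excess_connect a b : cin a < cout a ->
  (forall x, x != a -> x != b -> cin x = cout x) ->
  connect (srel ends o S) a b.
Proof.
move=> lt bal; apply/negPn/negP => nab.
have := subset_leq_card (out_sub_in a).
rewrite -!(sum_fibres _ (connect (srel ends o S) a)) -/cin -/cout.
rewrite (bigD1 a) ?connect0 //= [X in _ <= X](bigD1 a) ?connect0 //=.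
rewrite (eq_bigr cin) => [|x /andP [ax xa]]; first by rewrite leq_add2r leqNgt lt.
by rewrite bal //; apply: contraNneq nab => <-.
Qed.

Lemma balanced_connect g : (forall x, cin x = cout x) -> S g ->
  connect (srel ends o S) (hd ends o g) (tl ends o g).
Proof.
move=> bal Sg; apply/negPn/negP => nc.
set R := connect (srel ends o S) (hd ends o g).
have eqs : \sum_(x | R x) cout x = \sum_(x | R x) cin x.
  by apply: eq_bigr => x _; rewrite bal.
rewrite /cout /cin !sum_fibres in eqs.
have : [set f | S f && R (tl ends o f)] \proper [set f | S f && R (hd ends o f)].
  by apply/properP; split; [exact: out_sub_in | exists g; rewrite !inE Sg /R ?connect0].
by move/proper_card; rewrite eqs ltnn.
Qed.

Lemma flow_alternative u v :
  (forall x, x != u -> x != v -> cin x = cout x) ->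
  cin u + cin v = cout u + cout v ->
  [\/ connect (srel ends o S) u v, connect (srel ends o S) v u
    | forall x, cin x = cout x].
Proof.
move=> bal buv; case: (ltngtP (cin u) (cout u)) => [lt|gt|equ].
- by constructor 1; apply: excess_connect lt bal.
- constructor 2; apply: excess_connect => [|x xv xu]; last exact: bal.
  rewrite ltnNge; apply: contraTN gt => le.
  by rewrite -leqNgt -(leq_add2r (cin v)) buv leq_add2l.
- constructor 3 => x.
  case: (x =P u) => [->//|/eqP xu]; case: (x =P v) => [->|/eqP xv]; last exact: bal.
  by apply/eqP; rewrite -(eqn_add2l (cin u)) buv equ.
Qed.

End Flows.

Section Contraction.
Variables (V E : finType) (ends : E -> V * V) (e : E).
Hypothesis he : (ends e).1 != (ends e).2.

Definition merge (x : V) : V := if x == (ends e).2 then (ends e).1 else x.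

Lemma card_cE (P : pred E) :
  #|[set f : cE e | P (val f)]| = #|[set f | (f != e) && P f]|.
Proof.
rewrite -(card_imset _ val_inj); apply: eq_card => f; rewrite !inE.
apply/imsetP/andP => [[g gin ->]|[fe Pf]].
  by rewrite inE in gin; split => //; apply: (valP g).
by exists (exist (fun g => g != e) f fe); rewrite ?inE.
Qed.

Lemma hd_c_or o (f : cE e) :
  hd (c_ends he) (c_or o) f = contr_v he (hd ends o (val f)).
Proof. by rewrite /hd /c_ends /c_or; case: (o (val f)). Qed.

Lemma tl_c_or o (f : cE e) :
  tl (c_ends he) (c_or o) f = contr_v he (tl ends o (val f)).
Proof. by rewrite /tl /c_ends /c_or; case: (o (val f)). Qed.

Lemma contr_count (o1 o2 : E -> bool) (y : cV ends e)
    (hc : cE e -> cV ends e) (h : E -> V) :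
  (forall f, hc f = contr_v he (h (val f))) ->
  #|[set f : cE e | (c_or o1 f != c_or o2 f) && (hc f == y)]| =
  #|[set f | ((f != e) && (o1 f != o2 f)) && (merge (h f) == val y)]|.
Proof.
move=> hcE.
pose P g := (o1 g != o2 g) && (merge (h g) == val y).
transitivity #|[set f : cE e | P (val f)]|.
  by apply: eq_card => f; rewrite !inE hcE -val_eqE.
by rewrite (card_cE P); apply: eq_card => f; rewrite !inE andbA.
Qed.

Lemma sum_merge_other y (F : V -> nat) : y != (ends e).1 -> y != (ends e).2 ->
  \sum_(x | merge x == y) F x = F y.
Proof.
move=> y1 y2; apply: big_pred1 => x; rewrite /merge /=.
by case: (x =P (ends e).2) => [->|//]; rewrite eq_sym (negbTE y1) eq_sym (negbTE y2).
Qed.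

Lemma sum_merge_e (F : V -> nat) :
  \sum_(x | merge x == (ends e).1) F x = F (ends e).1 + F (ends e).2.
Proof.
rewrite (bigD1 (ends e).1) /=; last by rewrite /merge eq_sym (negbTE he).
congr (_ + _); apply: big_pred1 => x; rewrite /merge /=.
by case: (x =P (ends e).2) => [->|_]; rewrite ?eqxx ?andbN // eq_sym he.
Qed.

Lemma contr_balance o1 o2 (y : cV ends e) :
  eulerian_equiv (c_ends he) (c_or o1) (c_or o2) ->
  \sum_(x | merge x == val y) cin ends o1 [pred f | (f != e) && (o1 f != o2 f)] x =
  \sum_(x | merge x == val y) cout ends o1 [pred f | (f != e) && (o1 f != o2 f)] x.
Proof.
move=> /(_ y); rewrite (contr_count _ _ _ (hd_c_or o1)) (contr_count _ _ _ (tl_c_or o1)).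
by rewrite /cin /cout !sum_fibres.
Qed.

End Contraction.

Lemma reduced_diff_acyclic (V : finType) (m : nat) (ends : 'I_m.+1 -> V * V)
    (eps o1 o2 : 'I_m.+1 -> bool) c :
  reduced ends eps o1 -> reduced ends eps o2 ->
  dcycle ends o1 c -> ~~ all [pred f | o1 f != o2 f] c.
Proof.
move=> R1 R2 dc; apply/negP => /allP diff.
have [f0 f0c] : exists f0, f0 \in c.
  by case: c dc diff => [/and3P []//|f0 c] _ _; exists f0; rewrite inE eqxx.
case: (arg_maxnP val f0c) => g gc gmax.
have below h : h \in c -> h != g -> (h < g)%N.
  by move=> hc hg; rewrite ltn_neqAle val_eqE hg; apply: gmax.
have flip f : f \in c -> o2 f = ~~ o1 f.
  by move=> /diff /=; case: (o1 f); case: (o2 f).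
have eps1 : o1 g = eps g.
  by case: (R1 g) => // -[]; exists c.
have eps2 : o2 g = eps g.
  case: (R2 g) => // -[]; exists (rev c); split.
  - exact: dcycle_rev flip dc.
  - by rewrite mem_rev.
  - by move=> h; rewrite mem_rev; apply: below.
by have := diff g gc; rewrite /= eps1 eps2 eqxx.
Qed.

Section LargestEdge.
Variables (V E : finType) (ends : E -> V * V) (e : E).
Hypothesis he : (ends e).1 != (ends e).2.

Definition joins (a b : V) :=
  ((a == (ends e).1) && (b == (ends e).2)) || ((a == (ends e).2) && (b == (ends e).1)).

Lemma hd_neq_tl o : hd ends o e != tl ends o e.
Proof. by rewrite /hd /tl; case: (o e); rewrite // eq_sym. Qed.

Lemma joins_sym a b : joins a b = joins b a.
Proof. by rewrite /joins orbC; congr (_ || _); apply: andbC. Qed.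

Lemma not_flippable_back o : totally_cyclic ends o -> ~~ cycle_flippable ends o e ->
  ~ connect (dstep ends o e) (tl ends o e) (hd ends o e).
Proof.
move=> /(_ e) [c [dc ec]] nf; move: nf (dcycle_connect dc ec).
rewrite /cycle_flippable /tl /hd.
by case: (o e) => nf fwd back; move: nf; rewrite fwd back.
Qed.

Lemma forced_direction o a b : totally_cyclic ends o -> ~~ cycle_flippable ends o e ->
  joins a b -> connect (dstep ends o e) a b ->
  a = hd ends o e /\ b = tl ends o e.
Proof.
move=> tc nf jab ab; move: (not_flippable_back tc nf); rewrite /hd /tl.
by case/orP: jab => /andP [/eqP -> /eqP ->] in ab *; case: (o e) => // /(_ ab).
Qed.

Section TwoOrientations.
Variables (o1 o2 : E -> bool).
Hypotheses (tc1 : totally_cyclic ends o1) (tc2 : totally_cyclic ends o2).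
Hypotheses (nf1 : ~~ cycle_flippable ends o1 e) (nf2 : ~~ cycle_flippable ends o2 e).
Hypothesis acyclic : forall c, dcycle ends o1 c -> ~~ all [pred f | o1 f != o2 f] c.

Let D := [pred f | o1 f != o2 f].
Let T := [pred f | (f != e) && (o1 f != o2 f)].

Lemma no_closing_walk_in_D f : D f ->
  ~ connect (srel ends o1 D) (hd ends o1 f) (tl ends o1 f).
Proof.
by move=> Df /(closing_walk_dcycle Df) [c [dc Dc]]; move: (acyclic dc); rewrite Dc.
Qed.

Lemma T_sub_D f : T f -> D f.
Proof. by case/andP. Qed.

Lemma ends_not_linked a b : joins a b -> ~ connect (srel ends o1 T) a b.
Proof.
move=> jab ab.
have [a1 b1] : a = hd ends o1 e /\ b = tl ends o1 e.
  apply: forced_direction => //; rewrite dstepE.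
  by apply: connect_srel_sub ab => f /andP [].
have [b2 a2] : b = hd ends o2 e /\ a = tl ends o2 e.
  apply: forced_direction => //; first by rewrite joins_sym.
  have flipT f : T f -> o2 f = ~~ o1 f.
    by case/andP=> _; case: (o1 f); case: (o2 f).
  rewrite dstepE; apply: connect_srel_sub (connect_srel_rev flipT ab).
  by move=> f /andP [].
have De : D e.
  apply: contraNneq (hd_neq_tl o2) => same.
  by rewrite -a2 a1 /hd same.
apply: (no_closing_walk_in_D De); rewrite -a1 -b1.
exact: connect_srel_sub T_sub_D ab.
Qed.

Lemma balanced_T_empty : (forall x, cin ends o1 T x = cout ends o1 T x) ->
  forall f, f != e -> o1 f = o2 f.
Proof.
move=> bal f fe; apply/eqP/negPn/negP => Df.
have Tf : T f by rewrite /T /= fe.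
apply: (no_closing_walk_in_D Df).
exact: connect_srel_sub T_sub_D (balanced_connect bal Tf).
Qed.

(* (4), second half: orientations agreeing off e agree on e, since
   otherwise the walk closing e in o2 bypasses e backwards in o1 *)
Lemma agree_at_e : (forall f, f != e -> o1 f = o2 f) -> o1 e = o2 e.
Proof.
move=> agree; apply/eqP/negPn/negP => diff_e.
have same_step : dstep ends o2 e =2 dstep ends o1 e.
  move=> x y; apply/existsP/existsP => -[f /and3P [fe tf hf]]; exists f;
    by move: tf hf; rewrite /tl /hd (agree f fe) fe => -> ->.
have [hd2 tl2] : hd ends o2 e = tl ends o1 e /\ tl ends o2 e = hd ends o1 e.
  by move: diff_e; rewrite /hd /tl; case: (o1 e); case: (o2 e).
have [c [dc ec]] := tc2 e.
apply: (not_flippable_back tc1 nf1).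
by rewrite -hd2 -tl2 -(eq_connect same_step); apply: dcycle_connect dc ec.
Qed.

End TwoOrientations.
End LargestEdge.

Theorem lemma4 (V : finType) (m : nat) (ends : 'I_m.+1 -> V * V)
  (eps o1 o2 : 'I_m.+1 -> bool)
  (he : (ends ord_max).1 != (ends ord_max).2) :
  connected ends ->
  o1 <> o2 ->
  totally_cyclic ends o1 -> totally_cyclic ends o2 ->
  reduced ends eps o1 -> reduced ends eps o2 ->
  ~~ cycle_flippable ends o1 ord_max -> ~~ cycle_flippable ends o2 ord_max ->
  ~ eulerian_equiv (c_ends he) (c_or o1) (c_or o2).
Proof.
move=> _ o12 tc1 tc2 R1 R2 nf1 nf2 euler.
have acyclic := reduced_diff_acyclic R1 R2.
set T := [pred f | (f != ord_max) && (o1 f != o2 f)].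
have balT x : x != (ends ord_max).1 -> x != (ends ord_max).2 ->
    cin ends o1 T x = cout ends o1 T x.
  move=> x1 x2; have := contr_balance (exist _ x x2) euler.
  by rewrite !sum_merge_other.
have bal_ends : cin ends o1 T (ends ord_max).1 + cin ends o1 T (ends ord_max).2 =
                cout ends o1 T (ends ord_max).1 + cout ends o1 T (ends ord_max).2.
  have := contr_balance (exist (fun y => y != (ends ord_max).2) _ he) euler.
  by rewrite !(sum_merge_e he).
have not_linked := ends_not_linked he tc1 tc2 nf1 nf2 acyclic.
case: (flow_alternative balT bal_ends) => [uv|vu|bal].
- by apply: not_linked uv; rewrite /joins !eqxx.
- by apply: not_linked vu; rewrite /joins !eqxx orbT.
have agree := balanced_T_empty acyclic bal.
have agree_e := agree_at_e tc1 tc2 nf1 agree.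
apply: o12; apply: functional_extensionality => f.
by case: (f =P ord_max) => [->|/eqP]; [exact: agree_e | exact: agree].
Qed.
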